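(* Let $G$ be a connected graph whose set $V_1$ of degree-one vertices is nonempty, say $V_1=\{v_1,\dots,v_i\}$. Let $G\oplus V_1'$ be the graph with vertex set $V(G)\cup\{v_1',\dots,v_i'\}$ (where $v_1',\dots,v_i'$ are new vertices) and edge set $E(G)\cup\{v_1v_1',\dots,v_iv_i'\}$. If $G$ is strongly antimagic, then $G\oplus V_1'$ is strongly antimagic.
   Context: All graphs are finite and simple. For a graph $G=(V,E)$ and a bijection $f:E\to\{1,2,\dots,|E|\}$, the vertex sum at $u$ is $\varphi_f(u)=\sum_{e\in E(u)}f(e)$, where $E(u)$ is the set of edges incident to $u$. The labeling $f$ is antimagic if $\varphi_f(u)\neq\varphi_f(v)$ for all distinct $u,v\in V$; it is strongly antimagic if it is antimagic and moreover $\deg(u)<\deg(v)$ implies $\varphi_f(u)<\varphi_f(v)$. A graph is strongly antimagic if it admits a strongly antimagic labeling. $V_k$ denotes the set of vertices of degree $k$. *)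

(* A simple graph is a symmetric irreflexive relation e on a finType V. *)
From mathcomp Require Import all_boot.
Set Implicit Arguments. Unset Strict Implicit. Unset Printing Implicit Defensive.

Definition edges (V : finType) (e : rel V) : {set {set V}} :=
  [set A : {set V} | [exists x, exists y, e x y && (A == [set x; y])]].

Definition deg (V : finType) (e : rel V) (u : V) : nat := #|[set v | e u v]|.

Definition is_labeling (V : finType) (e : rel V) (f : {set V} -> nat) : Prop :=
  [/\ {in edges e &, injective f},
      (forall A, A \in edges e -> 1 <= f A <= #|edges e|) &
      (forall k, 1 <= k <= #|edges e| -> exists2 A, A \in edges e & f A = k)].

Definition vsum (V : finType) (e : rel V) (f : {set V} -> nat) (u : V) : nat :=
  \sum_(A in edges e | u \in A) f A.

Definition strongly_antimagic_labeling (V : finType) (e : rel V)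
  (f : {set V} -> nat) : Prop :=
  [/\ is_labeling e f,
      (forall u v : V, u != v -> vsum e f u != vsum e f v) &
      (forall u v : V, deg e u < deg e v -> vsum e f u < vsum e f v)].

Definition strongly_antimagic (V : finType) (e : rel V) : Prop :=
  exists f, strongly_antimagic_labeling e f.

(* Vertices of G (+) V1': old vertices inl x, plus a new vertex inr x for each
   degree-one vertex x of G. *)
Definition ext_pred (V : finType) (e : rel V) : pred (V + V) :=
  fun w => match w with inl _ => true | inr x => deg e x == 1 end.

Definition ext_vert (V : finType) (e : rel V) : finType := {w : V + V | ext_pred e w}.

Definition ext_rel (V : finType) (e : rel V) : rel (ext_vert e) :=
  fun u w => match val u, val w with
             | inl x, inl y => e x y
             | inl x, inr y => x == y
             | inr x, inl y => x == y
             | inr _, inr _ => false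
             end.
Arguments ext_rel {V} e.

(* Keep the labels of G, shifted up by n1 = |V1|, and give the n1 new pendant
   edges the labels 1..n1, in the order of the vertex sums of their old
   endpoints.  A new leaf then has sum in [1, n1], below every old vertex of
   positive degree; an old vertex of degree d gets sum phi + d n1 (plus a label
   at most n1 if d = 1), which preserves the strict order of the old sums
   because phi is already increasing along degrees. *)

From mathcomp Require Import all_boot.
From mathcomp Require Import zify.

Lemma inj_in_range_onto (T : finType) (S : {set T}) (g : T -> nat) :
  {in S &, injective g} -> (forall A, A \in S -> 1 <= g A <= #|S|) ->
  forall k, 1 <= k <= #|S| -> exists2 A, A \in S & g A = k.
Proof.
move=> g_inj g_range k k_range.
have g_uniq : uniq (map g (enum S)).
  by rewrite map_inj_in_uniq ?enum_uniq // => x y; rewrite !mem_enum; apply: g_inj.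
have g_sub : {subset map g (enum S) <= iota 1 #|S|}.
  move=> y /mapP [x]; rewrite mem_enum => xS ->; rewrite mem_iota.
  by have := g_range x xS; lia.
have g_size : size (iota 1 #|S|) <= size (map g (enum S)).
  by rewrite size_map size_iota -cardE.
have [_ g_onto] := uniq_min_size g_uniq g_sub g_size.
have : k \in map g (enum S) by rewrite g_onto mem_iota; lia.
by case/mapP=> x; rewrite mem_enum => xS ->; exists x.
Qed.

Lemma deg_sum1 (V : finType) (e : rel V) :
  symmetric e -> irreflexive e ->
  forall u, deg e u = \sum_(A in edges e | u \in A) 1.
Proof.
move=> e_sym e_irr u.
have incident_edgesE :
    (fun v => [set u; v]) @: [set v | e u v] =i [pred A in edges e | u \in A].
  move=> A; rewrite inE; apply/imsetP/andP.
    case=> v; rewrite inE => euv ->; split; last by rewrite !inE eqxx.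
    by rewrite /edges inE; apply/existsP; exists u; apply/existsP; exists v; rewrite euv eqxx.
  case; rewrite /edges inE => /existsP [x /existsP [y /andP [exy /eqP ->]]].
  rewrite !inE => /orP [] /eqP ->; first by exists y; rewrite ?inE.
  by exists x; [rewrite inE e_sym | rewrite setUC].
rewrite sum1_card -(eq_card incident_edgesE) card_in_imset // => v w.
rewrite !inE => euv _ vw.
have : v \in [set u; w] by rewrite -vw !inE eqxx orbT.
rewrite !inE => /orP [/eqP vu|/eqP //].
by move: euv; rewrite vu e_irr.
Qed.
Arguments deg_sum1 {V e}.

Lemma vsum_deg0 (V : finType) (e : rel V) (e_sym : symmetric e) (e_irr : irreflexive e)
  (f : {set V} -> nat) u : deg e u = 0 -> vsum e f u = 0.
Proof.
rewrite (deg_sum1 e_sym e_irr) sum1_card => /card0_eq no_edge.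
by rewrite /vsum big_pred0.
Qed.
Arguments vsum_deg0 {V e}.

Section Rank.
Variables (T : finType) (S : {set T}) (k : T -> nat).

Definition key_rank (x : T) : nat := #|[set y in S | k y <= k x]|.

Lemma key_rank_gt0 x : x \in S -> 0 < key_rank x.
Proof. by move=> xS; apply/card_gt0P; exists x; rewrite inE xS leqnn. Qed.

Lemma key_rank_le_card x : key_rank x <= #|S|.
Proof. by apply: subset_leq_card; apply/subsetP => y; rewrite inE => /andP []. Qed.

Lemma key_rank_lt x y : y \in S -> k x < k y -> key_rank x < key_rank y.
Proof.
move=> yS kxy; apply: proper_card; apply/properP; split.
  apply/subsetP => z; rewrite !inE => /andP [-> kzx] /=.
  exact: leq_trans kzx (ltnW kxy).
by exists y; rewrite !inE yS ?leqnn // -ltnNge.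
Qed.

Lemma key_rank_inj : {in S &, injective k} -> {in S &, injective key_rank}.
Proof.
move=> k_inj x y xS yS rxy; apply: k_inj => //.
case: (ltngtP (k x) (k y)) => // [/(@key_rank_lt x y yS) | /(@key_rank_lt y x xS)].
  by rewrite rxy ltnn.
by rewrite rxy ltnn.
Qed.

End Rank.
Arguments key_rank {T} S k x.
Arguments key_rank_gt0 {T S k x}.
Arguments key_rank_le_card {T} S k x.
Arguments key_rank_lt {T S k x y}.

Section Extension.
Variables (V : finType) (e : rel V).
Hypotheses (e_sym : symmetric e) (e_irr : irreflexive e).
Local Notation W := (ext_vert e).
Local Notation e' := (ext_rel e).

Definition old_vertex (x : V) : W := exist _ (inl x) isT.
(* Unless [deg e x = 1], this is the junk value [old_vertex x]. *)
Definition new_vertex (x : V) : W := insubd (old_vertex x) (inr x).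
Definition pendant_edge (x : V) : {set W} := [set old_vertex x; new_vertex x].
Definition V1 : {set V} := [set x | deg e x == 1].
Definition old_edges : {set {set W}} := [set old_vertex @: B | B : {set V} in edges e].
Definition new_edges : {set {set W}} := [set pendant_edge x | x in V1].

Lemma val_new_vertex x : x \in V1 -> val (new_vertex x) = inr x.
Proof. by rewrite inE => x1; rewrite /new_vertex insubdK. Qed.

Lemma old_vertex_inj : injective old_vertex.
Proof. by move=> x y /(congr1 val) [->]. Qed.

Lemma old_new_vertexF x y : y \in V1 -> (old_vertex x == new_vertex y) = false.
Proof. by move=> y1; apply/negbTE/eqP => /(congr1 val); rewrite val_new_vertex. Qed.

Lemma new_vertex_eq x y : x \in V1 -> y \in V1 -> (new_vertex x == new_vertex y) = (x == y).
Proof.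
move=> x1 y1; apply/eqP/eqP => [/(congr1 val)|->//].
by rewrite !val_new_vertex // => -[].
Qed.

Lemma ext_vertexP (w : W) :
  (exists x, w = old_vertex x) \/ (exists2 x, x \in V1 & w = new_vertex x).
Proof.
case: w => [[x|x] px]; [left; exists x | right; exists x; rewrite ?inE //].
  exact: val_inj.
by apply: val_inj; rewrite val_new_vertex ?inE.
Qed.

Lemma ext_sym : symmetric e'.
Proof. by move=> [[x|x] px] [[y|y] py]; rewrite /ext_rel /= 1?e_sym // eq_sym. Qed.

Lemma ext_irr : irreflexive e'.
Proof. by move=> [[x|x] px]; rewrite /ext_rel /= ?e_irr. Qed.

Lemma new_vertex_notin_old x (B : {set V}) : x \in V1 -> new_vertex x \notin old_vertex @: B.
Proof. by move=> x1; apply/imsetP => -[y _ /eqP]; rewrite eq_sym old_new_vertexF. Qed.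

Lemma pendant_edge_inj : {in V1 &, injective pendant_edge}.
Proof.
move=> x y x1 y1 /setP /(_ (new_vertex x)).
rewrite !inE eqxx orbT [new_vertex x == _]eq_sym old_new_vertexF //.
by rewrite new_vertex_eq // => /esym/eqP.
Qed.

Lemma edges_extE : edges e' = old_edges :|: new_edges.
Proof.
apply/setP => A; rewrite /edges inE; apply/existsP/setUP.
  case=> u /existsP [w /andP [uw /eqP ->]]; move: uw.
  case: (ext_vertexP u) => [[x ->]|[x x1 ->]]; case: (ext_vertexP w) => [[y ->]|[y y1 ->]].
  - move=> exy; left; apply/imsetP; exists [set x; y]; last by rewrite imsetU1 imset_set1.
    rewrite /edges inE; apply/existsP; exists x; apply/existsP; exists y.
    by rewrite [e x y]exy eqxx.
  - rewrite /ext_rel val_new_vertex //= => /eqP xy; subst y.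
    by right; apply/imsetP; exists x.
  - rewrite /ext_rel val_new_vertex //= => /eqP xy; subst y.
    by right; apply/imsetP; exists x; rewrite // /pendant_edge setUC.
  - by rewrite /ext_rel !val_new_vertex.
case=> /imsetP.
  case=> B; rewrite /edges inE => /existsP [x /existsP [y /andP [exy /eqP ->]]] ->.
  exists (old_vertex x); apply/existsP; exists (old_vertex y).
  by rewrite imsetU1 imset_set1 eqxx andbT.
case=> x x1 ->; exists (old_vertex x); apply/existsP; exists (new_vertex x).
by rewrite /ext_rel val_new_vertex //= !eqxx.
Qed.

Lemma old_new_edges_disjoint : [disjoint old_edges & new_edges].
Proof.
rewrite -setI_eq0; apply/eqP/setP => A; rewrite !inE.
apply/andP => -[/imsetP [B _ ->] /imsetP [x x1 /setP /(_ (new_vertex x))]].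
by rewrite !inE eqxx orbT (negbTE (new_vertex_notin_old x B x1)).
Qed.

Lemma card_edges_ext : #|edges e'| = #|edges e| + #|V1|.
Proof.
rewrite edges_extE cardsU (disjoint_setI0 old_new_edges_disjoint) cards0 subn0.
by rewrite (card_in_imset (in2W (imset_inj old_vertex_inj))) (card_in_imset pendant_edge_inj).
Qed.

Lemma sum_incident_ext (h : {set W} -> nat) w :
  \sum_(A in edges e' | w \in A) h A =
  \sum_(B in edges e | w \in old_vertex @: B) h (old_vertex @: B) +
  \sum_(x in V1 | w \in pendant_edge x) h (pendant_edge x).
Proof.
rewrite edges_extE big_mkcondr /= (eq_bigl [predU old_edges & new_edges]); last first.
  by move=> A; rewrite !inE.
rewrite bigU ?old_new_edges_disjoint // -!big_mkcondr.
rewrite (big_imset_cond _ _ _ (in2W (imset_inj old_vertex_inj))).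
by rewrite (big_imset_cond _ _ _ pendant_edge_inj).
Qed.

Lemma sum_incident_old (h : {set W} -> nat) x :
  \sum_(A in edges e' | old_vertex x \in A) h A =
  \sum_(B in edges e | x \in B) h (old_vertex @: B) + (x \in V1) * h (pendant_edge x).
Proof.
rewrite sum_incident_ext; congr (_ + _).
  by apply: eq_bigl => B; rewrite (mem_imset _ _ old_vertex_inj).
rewrite (eq_bigl (fun y => (x \in V1) && (y == x))); last first.
  move=> y; case y1: (y \in V1); rewrite /pendant_edge ?in_set2 /=.
    rewrite old_new_vertexF // orbF (inj_eq old_vertex_inj) eq_sym.
    by case: eqP => [<-|]; rewrite ?y1 ?eqxx ?andbF.
  by case: eqP => [<-|]; rewrite ?y1 ?andbF.
by case: (x \in V1); rewrite ?big_pred1_eq ?big_pred0 // mul1n.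
Qed.

Lemma sum_incident_new (h : {set W} -> nat) x : x \in V1 ->
  \sum_(A in edges e' | new_vertex x \in A) h A = h (pendant_edge x).
Proof.
move=> x1; rewrite sum_incident_ext big_pred0 => [|B]; last first.
  by rewrite (negbTE (new_vertex_notin_old x B x1)) andbF.
rewrite add0n (eq_bigl (pred1 x)) ?big_pred1_eq // => y /=.
case y1: (y \in V1); rewrite /pendant_edge ?in_set2 /=.
  by rewrite eq_sym old_new_vertexF // new_vertex_eq // eq_sym.
by case: eqP => // yx; move: y1; rewrite yx x1.
Qed.

Lemma deg_ext_old x : deg e' (old_vertex x) = deg e x + (x \in V1).
Proof.
rewrite (deg_sum1 ext_sym ext_irr) (sum_incident_old (fun _ => 1)).
by rewrite (deg_sum1 e_sym e_irr) muln1.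
Qed.

Lemma deg_ext_new x : x \in V1 -> deg e' (new_vertex x) = 1.
Proof. by move=> x1; rewrite (deg_sum1 ext_sym ext_irr) (sum_incident_new (fun _ => 1)). Qed.

Section Labeling.
Variable f : {set V} -> nat.
Hypothesis f_sa : strongly_antimagic_labeling e f.

Local Notation n1 := #|V1|.
Local Notation leaf_rank := (key_rank V1 (vsum e f)).

Definition ext_labeling (A : {set W}) : nat :=
  if [pick x in V1 | A == pendant_edge x] is Some x then leaf_rank x
  else f (old_vertex @^-1: A) + n1.

Local Notation g := ext_labeling.

Lemma ext_labeling_new x : x \in V1 -> g (pendant_edge x) = leaf_rank x.
Proof.
move=> x1; rewrite /ext_labeling; case: pickP => [y /andP [y1 /eqP xy]|/(_ x)].
  by rewrite (pendant_edge_inj _ _ x1 y1 xy).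
by rewrite x1 eqxx.
Qed.

Lemma ext_labeling_old (B : {set V}) : g (old_vertex @: B) = f B + n1.
Proof.
rewrite /ext_labeling; case: pickP => [y /andP [y1 /eqP Bpy]|_].
  by have := new_vertex_notin_old y B y1; rewrite Bpy !inE eqxx orbT.
by congr (f _ + _); apply/setP => x; rewrite inE (mem_imset _ _ old_vertex_inj).
Qed.

Lemma leaf_rank_inj : {in V1 &, injective leaf_rank}.
Proof.
have [_ vsum_neq _] := f_sa.
by apply: key_rank_inj => x y _ _; apply: contra_eq; apply: vsum_neq.
Qed.

Lemma ext_labeling_is_labeling : is_labeling e' g.
Proof.
have [[f_inj f_range _] _ _] := f_sa.
have rank_range x : x \in V1 -> 0 < leaf_rank x <= n1.
  by move=> x1; rewrite key_rank_gt0 ?key_rank_le_card.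
have g_range A : A \in edges e' -> 1 <= g A <= #|edges e'|.
  rewrite card_edges_ext edges_extE => /setUP [] /imsetP [B B_in ->].
    by rewrite ext_labeling_old; have := f_range B B_in; lia.
  by rewrite ext_labeling_new //; have := rank_range B B_in; lia.
have g_inj : {in edges e' &, injective g}.
  move=> A A'; rewrite !edges_extE.
  move=> /setUP [] /imsetP [B B_in ->] /setUP [] /imsetP [B' B'_in ->].
  - rewrite !ext_labeling_old => fBB'.
    by rewrite (f_inj B B' B_in B'_in) //; lia.
  - rewrite ext_labeling_old ext_labeling_new //.
    by have := f_range B B_in; have := rank_range B' B'_in; lia.
  - rewrite ext_labeling_old ext_labeling_new //.
    by have := f_range B' B'_in; have := rank_range B B_in; lia.
  - by rewrite !ext_labeling_new // => /leaf_rank_inj ->.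
by split => //; apply: inj_in_range_onto.
Qed.

Lemma vsum_ext_old x :
  vsum e' g (old_vertex x) = vsum e f x + deg e x * n1 + (x \in V1) * leaf_rank x.
Proof.
rewrite [vsum e' g _]/vsum sum_incident_old (eq_bigr _ (fun B _ => ext_labeling_old B)).
rewrite big_split /= (deg_sum1 e_sym e_irr) big_distrl /=.
congr (_ + _ + _); first by apply: eq_bigr => B _; rewrite mul1n.
by have [x1|_] := boolP (x \in V1); [rewrite ext_labeling_new | rewrite !mul0n].
Qed.

Lemma vsum_ext_new x : x \in V1 -> vsum e' g (new_vertex x) = leaf_rank x.
Proof. by move=> x1; rewrite [vsum e' g _]/vsum sum_incident_new // ext_labeling_new. Qed.

Lemma vsum_ext_old_lt x y :
  vsum e f x < vsum e f y -> vsum e' g (old_vertex x) < vsum e' g (old_vertex y).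
Proof.
have [_ _ f_mono] := f_sa.
move=> lt_xy; have le_deg : deg e x <= deg e y.
  by rewrite leqNgt; apply/negP => /f_mono; lia.
have := leq_mul le_deg (leqnn n1); have := key_rank_le_card V1 (vsum e f) x.
rewrite !vsum_ext_old; have [x1|x0] := boolP (x \in V1); have [y1|y0] := boolP (y \in V1).
- by have := key_rank_lt y1 lt_xy; lia.
- by move: x1 y0; rewrite !inE; nia.
- by move: x0 y1; rewrite !inE; nia.
- by lia.
Qed.

Lemma ext_old_new_order x y : y \in V1 ->
  (deg e' (old_vertex x) < deg e' (new_vertex y)) &&
    (vsum e' g (old_vertex x) < vsum e' g (new_vertex y)) ||
  (deg e' (new_vertex y) < deg e' (old_vertex x)) &&
    (vsum e' g (new_vertex y) < vsum e' g (old_vertex x)).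
Proof.
move=> y1; rewrite deg_ext_old deg_ext_new // vsum_ext_old vsum_ext_new //.
have := key_rank_gt0 (k := vsum e f) y1; have := key_rank_le_card V1 (vsum e f) y.
have [dx0|dx_gt0] := posnP (deg e x).
  have x0 : x \notin V1 by rewrite inE dx0.
  by rewrite dx0 (negbTE x0) (vsum_deg0 e_sym e_irr f x dx0); lia.
have n1_gt0 : 0 < n1 by apply/card_gt0P; exists y.
have [x1|x0] := boolP (x \in V1).
  by have := key_rank_gt0 (k := vsum e f) x1; move: x1; rewrite inE; nia.
by move: x0; rewrite inE; nia.
Qed.

Lemma ext_labeling_deg_mono u w : deg e' u < deg e' w -> vsum e' g u < vsum e' g w.
Proof.
have [_ _ f_mono] := f_sa.
case: (ext_vertexP u) => [[x ->]|[x x1 ->]]; case: (ext_vertexP w) => [[y ->]|[y y1 ->]].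
- rewrite !deg_ext_old => lt_deg; apply/vsum_ext_old_lt/f_mono.
  by move: lt_deg; rewrite !inE; lia.
- by case/orP: (ext_old_new_order x _ y1) => /andP []; lia.
- by case/orP: (ext_old_new_order y _ x1) => /andP []; lia.
- by rewrite !deg_ext_new.
Qed.

Lemma ext_labeling_vsum_inj u w : u != w -> vsum e' g u != vsum e' g w.
Proof.
have [_ vsum_neq _] := f_sa.
case: (ext_vertexP u) => [[x ->]|[x x1 ->]]; case: (ext_vertexP w) => [[y ->]|[y y1 ->]].
- rewrite (inj_eq old_vertex_inj) => /vsum_neq; rewrite neq_ltn.
  by case/orP => /vsum_ext_old_lt lt_xy; rewrite neq_ltn lt_xy ?orbT.
- by case/orP: (ext_old_new_order x _ y1) => /andP []; lia.
- by case/orP: (ext_old_new_order y _ x1) => /andP []; lia.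
- rewrite new_vertex_eq // !vsum_ext_new //.
  by apply: contra_neq => /leaf_rank_inj ->.
Qed.

End Labeling.

End Extension.

Theorem lemma1 (V : finType) (e : rel V)
  (e_sym : symmetric e) (e_irr : irreflexive e)
  (e_conn : forall x y : V, connect e x y)
  (V1_nonempty : exists v : V, deg e v = 1) :
  strongly_antimagic e -> strongly_antimagic (ext_rel e).
Proof.
case=> f f_sa; exists (@ext_labeling V e f); split.
- exact: ext_labeling_is_labeling.
- exact: ext_labeling_vsum_inj.
- exact: ext_labeling_deg_mono.
Qed.
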